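(* Let $e\ge2$, $\kappa\in\mathbb Z^\ell$ with $\kappa_l-\kappa_{l+1}\ge n$, $\mathbb K$ a field and $0\ne t\in\mathbb K$ with $(\mathbb K,t)$ separating $\mathrm{Std}(\mathcal P_n)$. If $\mathbf i\in I^n$ and $1\le r<n$ satisfy $i_r=i_{r+1}$, then $T_rf_{\mathbf i}=f_{\mathbf i}T_r$ in $\mathscr H_n(\mathbb K)$.
   Context: Quantum integers $[d]=[d]_t$. $\mathscr H_n(\mathbb K)=\mathscr H_n(\mathbb K,t,\kappa)$: generators $L_1..L_n,T_1..T_{n-1}$, relations $\prod_l(L_1-[\kappa_l])=0$, $(T_r+1)(T_r-t)=0$, $L_rL_s=L_sL_r$, $T_rT_s=T_sT_r$ ($|r-s|>1$), $T_sT_{s+1}T_s=T_{s+1}T_sT_{s+1}$, $T_rL_s=L_sT_r$ ($s\ne r,r+1$), $L_{r+1}(T_r-t+1)=T_rL_r+1$. Separation: $[n]^!\prod_{l<m}\prod_{-n<d<n}[\kappa_l-\kappa_m+d]\ne0$. $I=\mathbb Z/e\mathbb Z$; content of $(l,r,c)$ is $\kappa_l-r+c$, residue $\kappa_l+c-r\bmod e$; $c_k(\mathfrak t)$ the content of $k$; $\mathrm{Std}(\mathbf i)$ the standard $\ell$-multitableaux of size $n$ with residue sequence $\mathbf i$. With $\mathrm{Cont}$ the set of all contents of standard tableaux, $F_{\mathfrak t}=\prod_k\prod_{c\in\mathrm{Cont},[c_k(\mathfrak t)]\ne[c]}\frac{L_k-[c]}{[c_k(\mathfrak t)]-[c]}$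 and $f_{\mathbf i}=\sum_{\mathfrak t\in\mathrm{Std}(\mathbf i)}F_{\mathfrak t}$. *)

From HB Require Import structures.
From mathcomp Require Import all_boot all_order all_algebra.
Set Implicit Arguments. Unset Strict Implicit. Unset Printing Implicit Defensive.
Import Order.TTheory GRing.Theory Num.Theory.
Local Open Scope ring_scope.

Definition qint (K : fieldType) (t : K) (d : int) : K :=
  if t == 1 then d%:~R else (t ^ d - 1) / (t - 1).

(* Separation condition:
   [n]^! * prod_{l<m} prod_{-n<d<n} [kappa_l - kappa_m + d] <> 0. *)
Definition separating (K : fieldType) (t : K) (ell n : nat) (kappa : 'I_ell -> int) : Prop :=
  (\prod_(1 <= k < n.+1) qint t k%:Z) *
  (\prod_(l < ell) \prod_(m < ell | (l < m)%N)
      \prod_(j < (n.*2).-1) qint t (kappa l - kappa m + (j%:Z - (n%:Z - 1)))) != 0.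

(* ell-multipartitions of size n: row lengths lam l r (rows r = 0..n-1,
   padded with zeros), each component weakly decreasing, total size n.
   Every ell-multipartition of n is represented exactly once. *)
Definition mpart (ell n : nat) := {ffun 'I_ell -> {ffun 'I_n -> 'I_n.+1}}.

Definition is_mpart ell n (lam : mpart ell n) : bool :=
  [forall l, forall r : 'I_n, forall r' : 'I_n,
      ((r <= r')%N ==> (lam l r' <= lam l r)%N)]
  && ((\sum_(l < ell) \sum_(r < n) (lam l r : nat))%N == n).

(* Nodes (l, r, c): component l, row r, column c (0-based). *)
Definition node (ell n : nat) := ('I_ell * 'I_n * 'I_n)%type.
Definition ncomp ell n (x : node ell n) : 'I_ell := x.1.1.
Definition nrow ell n (x : node ell n) : nat := x.1.2.
Definition ncol ell n (x : node ell n) : nat := x.2.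

Definition in_diag ell n (lam : mpart ell n) (x : node ell n) : bool :=
  (ncol x < lam (ncomp x) x.1.2)%N.

(* A tableau is given by the position of each entry: entry k+1 sits at node
   pos k. *)
Definition tabl (ell n : nat) := {ffun 'I_n -> node ell n}.

Definition is_std ell n (lam : mpart ell n) (pos : tabl ell n) : bool :=
  [&& injectiveb pos,
      [forall x, in_diag lam x == (x \in codom pos)],
      [forall k, forall k',
         [&& ncomp (pos k') == ncomp (pos k), nrow (pos k') == nrow (pos k)
           & ncol (pos k') == (ncol (pos k)).+1] ==> (k < k')%N]
    & [forall k, forall k',
         [&& ncomp (pos k') == ncomp (pos k), ncol (pos k') == ncol (pos k)
           & nrow (pos k') == (nrow (pos k)).+1] ==> (k < k')%N]].

Definition std_pair ell n (p : mpart ell n * tabl ell n) : bool :=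
  is_mpart p.1 && is_std p.1 p.2.

(* content of (l,r,c) is kappa_l - r + c (same with 0- or 1-based r,c) *)
Definition content ell n (kappa : 'I_ell -> int) (x : node ell n) : int :=
  kappa (ncomp x) - (nrow x)%:Z + (ncol x)%:Z.

(* residue in I = Z/eZ (e >= 2, so 'Z_e is Z/eZ) *)
Definition residue (e : nat) ell n (kappa : 'I_ell -> int) (x : node ell n) : 'Z_e :=
  (content kappa x)%:~R.

Definition Cont ell n (kappa : 'I_ell -> int) : seq int :=
  undup [seq content kappa ((p : mpart ell n * tabl ell n).2 k)
          | p <- enum (@std_pair ell n), k <- enum 'I_n].

(* F_t, with L k the generator L_k (1-based) *)
Definition Fidem (K : fieldType) (A : algType K) (t : K) ell n (kappa : 'I_ell -> int)
  (L : nat -> A) (pos : tabl ell n) : A :=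
  \prod_(k < n)
    \prod_(c <- Cont n kappa | qint t (content kappa (pos k)) != qint t c)
      ((qint t (content kappa (pos k)) - qint t c)^-1 *: (L k.+1 - (qint t c)%:A)).

(* f_i = sum over standard tableaux with residue sequence i (i is 1-based) *)
Definition fidem (e : nat) (K : fieldType) (A : algType K) (t : K) ell n
  (kappa : 'I_ell -> int) (L : nat -> A) (i : nat -> 'Z_e) : A :=
  \sum_(p : mpart ell n * tabl ell n |
          std_pair p && [forall k : 'I_n, residue e kappa (p.2 k) == i k.+1])
     Fidem t kappa L p.2.

(* The defining relations of H_n(K, t, kappa), generators L_1..L_n, T_1..T_{n-1}
   (1-based indices into L, T : nat -> A). *)
Definition hecke_rels (K : fieldType) (A : algType K) (t : K) ell n
  (kappa : 'I_ell -> int) (L T : nat -> A) : Prop :=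
  ((0 < n)%N -> \prod_(l < ell) (L 1%N - (qint t (kappa l))%:A) = 0) /\
  (forall r, (1 <= r < n)%N -> (T r + 1) * (T r - t%:A) = 0) /\
  (forall r s, (1 <= r <= n)%N -> (1 <= s <= n)%N -> L r * L s = L s * L r) /\
  (forall r s, (1 <= r < n)%N -> (1 <= s < n)%N -> (r.+1 < s \/ s.+1 < r)%N ->
        T r * T s = T s * T r) /\
  (forall s, (1 <= s)%N -> (s.+1 < n)%N ->
        T s * T s.+1 * T s = T s.+1 * T s * T s.+1) /\
  (forall r s, (1 <= r < n)%N -> (1 <= s <= n)%N -> s != r -> s != r.+1 ->
        T r * L s = L s * T r) /\
  (forall r, (1 <= r < n)%N -> L r.+1 * (T r - t%:A + 1) = T r * L r + 1).

From HB Require Import structures.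
From mathcomp Require Import all_boot all_order all_algebra perm zify.
Import Order.TTheory GRing.Theory Num.Theory.
Local Open Scope ring_scope.
Set Implicit Arguments. Unset Strict Implicit. Unset Printing Implicit Defensive.

(** Swapping the entries [r] and [r+1] of a standard tableau [t] with
   [i_r = i_(r+1)] gives again a standard tableau [s_r t]: horizontally or
   vertically adjacent nodes have residues differing by [1], so [r] and [r+1]
   are not adjacent in [t].  Hence [f_i] is a sum of pairs
   [F_t + F_(s_r t)]; in each pair the factors for [k <> r, r+1] agree and
   commute with [T_r], and the two middle factors combine into
   [p(L_r) q(L_(r+1)) + q(L_r) p(L_(r+1))].  Such a symmetric expression
   commutes with [T_r] because, by the Hecke relations, [T_r] commutes with
   [L_r + L_(r+1)] and [L_r L_(r+1)], hence with every power sum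
   [L_r^m + L_(r+1)^m]. *)

Lemma big_fixfree_involution (I : finType) (V : nmodType) (P : pred I)
    (s : I -> I) (F : I -> V) :
  involutive s -> (forall p, P p -> P (s p)) -> (forall p, P p -> s p != p) ->
  \sum_(p | P p) F p =
  \sum_(p | P p && (enum_rank p < enum_rank (s p))%N) (F p + F (s p)).
Proof.
move=> sK Ps s_neq; rewrite big_split /=.
rewrite [LHS](bigID (fun p => enum_rank p < enum_rank (s p))%N) /=; congr (_ + _).
rewrite (reindex_inj (inv_inj sK)); apply: eq_bigl => p; rewrite sK.
have -> : P (s p) = P p by apply/idP/idP => /Ps; rewrite ?sK.
case Pp: (P p) => //=.
have ne : enum_rank p != enum_rank (s p) by rewrite (inj_eq enum_rank_inj) eq_sym s_neq.
by rewrite -leqNgt ltn_neqAle ne.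
Qed.

Lemma commrZ (K : pzRingType) (A : algType K) (x y : A) (a : K) :
  GRing.comm x y -> GRing.comm x (a *: y).
Proof.
by move=> cxy; rewrite -mulr_algl; apply: commrM cxy; apply/commr_sym/comm_alg.
Qed.

Lemma comm_horner_alg (K : nzRingType) (A : algType K) (x y : A) (p : {poly K}) :
  GRing.comm x y -> GRing.comm x (horner_alg y p).
Proof.
move=> cxy; elim/poly_ind: p => [|p a cxp].
  by rewrite rmorph0; apply: commr0.
rewrite rmorphD rmorphM /= horner_algX horner_algC.
by apply: commrD (commrM cxp cxy) _; apply/commr_sym/comm_alg.
Qed.

Lemma horner_algE (K : nzRingType) (A : algType K) (y : A) (p : {poly K}) :
  horner_alg y p = \sum_(i < size p) p`_i *: y ^+ i.
Proof.
rewrite -{1}[p]coefK poly_def linear_sum; apply: eq_bigr => i _.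
by rewrite -mul_polyC rmorphM /= horner_algC rmorphXn /= horner_algX mulr_algl.
Qed.

Section HeckeRankTwo.
Variables (K : fieldType) (A : algType K) (t : K) (T R S : A).
Hypotheses (t_neq0 : t != 0) (commRS : R * S = S * R).
Hypotheses (quadT : (T + 1) * (T - t%:A) = 0)
  (mulS_T : S * (T - t%:A + 1) = T * R + 1).

Let c := 1 + t *: S - S.

Lemma hecke_quadratic : (T - t%:A + 1) * T = t%:A.
Proof.
move: quadT; rewrite mulrDl mul1r mulrBr mulr_algr addrA => /subr0_eq q.
by rewrite mulrDl mul1r mulrBl mulr_algl.
Qed.

Lemma mulST : S * T = T * R + c.
Proof.
rewrite /c !addrA -mulS_T mulrDr mulrBr mulr1 mulr_algr.
by rewrite (addrAC _ S) addrK subrK.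
Qed.

Lemma mulTS : T * S = R * T + c.
Proof.
(* Multiply [t S = (T R + 1) T] on the left by [T - t + 1], then cancel [t]. *)
have tS : t *: S = T * R * T + T.
  by rewrite -mulr_algr -hecke_quadratic mulrA mulS_T mulrDl mul1r.
have : t *: ((T - t%:A + 1) * S) = t *: (R * T + 1).
  by rewrite scalerAr tS mulrDr !mulrA hecke_quadratic mulr_algl scalerDr -scalerAl.
move/(scalerI t_neq0); rewrite mulrDl mul1r mulrBl mulr_algl /c !addrA => <-.
by rewrite (addrAC _ S) addrK subrK.
Qed.

Lemma comm_hecke_add : GRing.comm T (R + S).
Proof. by rewrite /GRing.comm mulrDr mulrDl mulTS mulST addrCA addrA. Qed.

Lemma comm_hecke_mul : GRing.comm T (R * S).
Proof.
have cS : S * c = c * S.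
  by rewrite /c mulrBl mulrBr mulrDl mulrDr mul1r mulr1 -scalerAl -scalerAr.
have TR : T * R = S * T - c by rewrite mulST addrK.
by rewrite /GRing.comm mulrA TR mulrBl -(mulrA S) mulTS mulrDr mulrA -commRS cS addrK.
Qed.

Lemma comm_hecke_power_sum m : GRing.comm T (R ^+ m + S ^+ m).
Proof.
have SR j : S * R ^+ j = R ^+ j * S by apply/commrX/esym.
have newton k : R ^+ k.+2 + S ^+ k.+2 =
    (R + S) * (R ^+ k.+1 + S ^+ k.+1) - R * S * (R ^+ k + S ^+ k).
  rewrite mulrDl !mulrDr -!mulrA !SR !mulrA -!exprS.
  apply/eqP; rewrite eq_sym subr_eq addrACA [in X in _ == X]addrACA.
  by rewrite -(mulrA R S) -exprS [S ^+ k.+2 + _]addrC.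
suff: GRing.comm T (R ^+ m + S ^+ m) /\ GRing.comm T (R ^+ m.+1 + S ^+ m.+1) by case.
elim: m => [|m [cm cm1]].
  by rewrite !expr0 !expr1; split; [apply/commrD/commr1/commr1 | exact: comm_hecke_add].
split=> //; rewrite newton; apply: commrB; apply: commrM => //.
  exact: comm_hecke_add.
exact: comm_hecke_mul.
Qed.

Lemma comm_hecke_horner_add (p : {poly K}) :
  GRing.comm T (horner_alg R p + horner_alg S p).
Proof.
rewrite !horner_algE -big_split /=; apply: commr_sum => i _.
by rewrite -scalerDr; apply/commrZ/comm_hecke_power_sum.
Qed.

Lemma comm_hecke_symmetric (p q : {poly K}) :
  GRing.comm T (horner_alg R p * horner_alg S q + horner_alg R q * horner_alg S p).
Proof.
have SpRq : horner_alg S p * horner_alg R q = horner_alg R q * horner_alg S p.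
  by apply/commr_sym/comm_horner_alg/commr_sym/comm_horner_alg.
have -> : horner_alg R p * horner_alg S q + horner_alg R q * horner_alg S p =
    (horner_alg R p + horner_alg S p) * (horner_alg R q + horner_alg S q) -
    (horner_alg R (p * q) + horner_alg S (p * q)).
  rewrite !rmorphM /= mulrDl !mulrDr SpRq.
  by rewrite (addrC (horner_alg R p * _) (horner_alg R p * _)) addrACA addrK.
apply: commrB; last exact: comm_hecke_horner_add.
exact: commrM (comm_hecke_horner_add p) (comm_hecke_horner_add q).
Qed.

End HeckeRankTwo.

Lemma lt_tperm_adjacent n (i j a b : 'I_n) : j = i.+1 :> nat ->
  (tperm i j a < tperm i j b)%N -> (a, b) != (j, i) -> (a < b)%N.
Proof.
have nv (x y : 'I_n) : x <> y -> (x : nat) <> y by move=> + /val_inj.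
move=> ji; case: tpermP => [->|->|/nv ai /nv aj]; case: tpermP => [->|->|/nv bi /nv bj];
  rewrite ?eqxx //; lia.
Qed.

Lemma addr1_neq (R : nzRingType) (x : R) : x + 1 != x.
Proof. by rewrite -subr_eq0 addrAC subrr add0r oner_eq0. Qed.

Lemma subr1_neq (R : nzRingType) (x : R) : x - 1 != x.
Proof. by rewrite -subr_eq0 addrAC subrr add0r oppr_eq0 oner_eq0. Qed.

Section AdjacentNodes.
Variables (ell n : nat) (kappa : 'I_ell -> int) (x y : node ell n).
Hypothesis same_comp : ncomp y = ncomp x.

Lemma content_next_col :
  nrow y = nrow x -> ncol y = (ncol x).+1 -> content kappa y = content kappa x + 1.
Proof. by move=> hr hc; rewrite /content same_comp hr hc -addn1 PoszD addrA. Qed.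

Lemma content_next_row :
  ncol y = ncol x -> nrow y = (nrow x).+1 -> content kappa y = content kappa x - 1.
Proof. by move=> hc hr; rewrite /content same_comp hr hc; lia. Qed.

End AdjacentNodes.

Definition tabl_swap ell n (i j : 'I_n) (pos : tabl ell n) : tabl ell n :=
  [ffun k => pos (tperm i j k)].

Section TableauSwap.
Variables (e ell n : nat) (kappa : 'I_ell -> int) (i j : 'I_n).
Hypothesis j_succ : j = i.+1 :> nat.

Lemma increasing_tabl_swap (adj : rel (node ell n)) (pos : tabl ell n) :
  ~~ adj (pos i) (pos j) ->
  [forall k, forall k', adj (pos k) (pos k') ==> (k < k')%N] ->
  [forall k, forall k', adj (tabl_swap i j pos k) (tabl_swap i j pos k') ==> (k < k')%N].
Proof.
move=> nadj inc; apply/forallP => k; apply/forallP => k'; apply/implyP.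
rewrite !ffunE => a; apply: (lt_tperm_adjacent j_succ).
  exact: implyP (forallP (forallP inc _) _) a.
by apply: contraNneq nadj => -[eqk eqk']; rewrite eqk eqk' tpermL tpermR in a.
Qed.

Lemma is_std_swap (lam : mpart ell n) (pos : tabl ell n) :
  is_std lam pos -> residue e kappa (pos i) = residue e kappa (pos j) ->
  is_std lam (tabl_swap i j pos).
Proof.
move=> /and4P[/injectiveP inj cod rows cols] res; apply/and4P; split.
- by apply/injectiveP => k k'; rewrite !ffunE => /inj /perm_inj.
- apply/forallP => x; rewrite (eqP (forallP cod x)); apply/eqP.
  apply/codomP/codomP => -[k ->]; exists (tperm i j k); by rewrite ffunE ?tpermK.
- apply: (increasing_tabl_swap (adj := fun x y => [&& ncomp y == ncomp x,
    nrow y == nrow x & ncol y == (ncol x).+1])) rows.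
  apply/and3P => -[/eqP hc /eqP hr /eqP hk].
  move: res; rewrite /residue (content_next_col kappa hc hr hk) intrD.
  by move/esym/eqP; rewrite (negbTE (addr1_neq _)).
- apply: (increasing_tabl_swap (adj := fun x y => [&& ncomp y == ncomp x,
    ncol y == ncol x & nrow y == (nrow x).+1])) cols.
  apply/and3P => -[/eqP hc /eqP hk /eqP hr].
  move: res; rewrite /residue (content_next_row kappa hc hk hr) intrB.
  by move/esym/eqP; rewrite (negbTE (subr1_neq _)).
Qed.

Lemma residues_tabl_swap (pos : tabl ell n) (ires : nat -> 'Z_e) :
  ires i.+1 = ires j.+1 -> [forall k, residue e kappa (pos k) == ires k.+1] ->
  [forall k, residue e kappa (tabl_swap i j pos k) == ires k.+1].
Proof.
move=> ij /forallP res; apply/forallP => k; rewrite ffunE.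
by case: tpermP => [->|->|_ _]; rewrite ?(eqP (res _)) ?ij ?eqxx ?res.
Qed.

End TableauSwap.

Definition idem_poly (K : fieldType) (t : K) ell n (kappa : 'I_ell -> int) (z : int) :
  {poly K} :=
  \prod_(c <- Cont n kappa | qint t z != qint t c)
    ((qint t z - qint t c)^-1 *: ('X - (qint t c)%:P)).

Lemma Fidem_horner (K : fieldType) (A : algType K) (t : K) ell n
    (kappa : 'I_ell -> int) (L : nat -> A) (pos : tabl ell n.+1) :
  Fidem t kappa L pos = \prod_(0 <= k < n.+1)
    horner_alg (L k.+1) (idem_poly t n.+1 kappa (content kappa (pos (inord k)))).
Proof.
rewrite big_mkord; apply: eq_bigr => k _; rewrite inord_val rmorph_prod.
apply: eq_bigr => c _; rewrite -mul_polyC rmorphM rmorphB /=.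
by rewrite !horner_algC horner_algX mulr_algl.
Qed.

Lemma prod_nat_split_adjacent (R : pzSemiRingType) (F : nat -> R) m n :
  (m.+1 < n)%N ->
  \prod_(0 <= k < n) F k =
  \prod_(0 <= k < m) F k * (F m * F m.+1) * \prod_(m.+2 <= k < n) F k.
Proof.
move=> lt_mn; rewrite (big_cat_nat (n := m)) //=; last lia.
by rewrite (big_ltn (m := m)) 1?ltnW // (big_ltn (m := m.+1)) // !mulrA.
Qed.

Lemma comm_Fidem_add_swap (K : fieldType) (A : algType K) (t : K) ell n
    (kappa : 'I_ell -> int) (L T : nat -> A) (pos : tabl ell n.+1) m :
  t != 0 -> hecke_rels t n.+1 kappa L T -> (m.+1 < n.+1)%N ->
  GRing.comm (T m.+1)
    (Fidem t kappa L pos + Fidem t kappa L (tabl_swap (inord m) (inord m.+1) pos)).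
Proof.
move=> t_neq0 [_ [quadT [commL [_ [_ [commTL mulLT]]]]]] lt_mn.
set sw := tabl_swap _ _ pos.
have sw_out k : (k < m)%N || (m.+1 < k < n.+1)%N -> sw (inord k) = pos (inord k).
  by move=> k_out; rewrite ffunE tpermD // -(inj_eq val_inj) /= !inordK //; lia.
rewrite (Fidem_horner t kappa L pos) (Fidem_horner t kappa L sw).
rewrite !(prod_nat_split_adjacent _ lt_mn) !ffunE tpermL tpermR.
under [in X in _ + X]eq_big_nat => k /andP[_ lt_km] do rewrite sw_out ?lt_km //.
under [in X in _ + _ * X]eq_big_nat => k /andP[lt_mk lt_kn]
  do rewrite sw_out ?lt_mk ?lt_kn ?orbT //.
rewrite -mulrDl -mulrDr.
apply: commrM; first apply: commrM.
- rewrite big_nat_cond; apply: commr_prod => k /andP[/andP[_ lt_km] _].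
  by apply/comm_horner_alg/commTL; lia.
- apply: (comm_hecke_symmetric t_neq0); [apply: commL | apply: quadT | apply: mulLT]; lia.
- rewrite big_nat_cond; apply: commr_prod => k /andP[/andP[lt_mk lt_kn] _].
  by apply/comm_horner_alg/commTL; lia.
Qed.

Theorem lemma4p7 (e : nat) (ell n : nat) (kappa : 'I_ell -> int)
  (K : fieldType) (t : K) :
  (2 <= e)%N ->
  (forall l m : 'I_ell, m = l.+1 :> nat -> kappa l - kappa m >= n%:Z) ->
  t != 0 ->
  separating t n kappa ->
  forall (A : algType K) (L T : nat -> A),
  hecke_rels t n kappa L T ->
  forall (i : nat -> 'Z_e) (r : nat), (1 <= r < n)%N -> i r = i r.+1 ->
  T r * fidem t n kappa L i = fidem t n kappa L i * T r.
Proof.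
move=> _ _ t_neq0 _ A L T rels ires [//|m] /andP[_ lt_mn] ires_eq.
case: n rels lt_mn => [//|n] rels lt_mn.
set i0 : 'I_n.+1 := inord m; set i1 : 'I_n.+1 := inord m.+1.
have val_i0 : i0 = m :> nat by rewrite inordK; lia.
have val_i1 : i1 = m.+1 :> nat by rewrite inordK.
pose sw (p : mpart ell n.+1 * tabl ell n.+1) := (p.1, tabl_swap i0 i1 p.2).
rewrite /fidem (big_fixfree_involution (s := sw)).
- by apply: commr_sum => p _; exact: comm_Fidem_add_swap.
- by case=> lam pos; congr pair; apply/ffunP => k; rewrite !ffunE tpermK.
- move=> [lam pos] /andP[/andP[mp st] res].
  have res_eq : residue e kappa (pos i0) = residue e kappa (pos i1).
    by rewrite (eqP (forallP res i0)) (eqP (forallP res i1)) val_i0 val_i1.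
  have succ : i1 = i0.+1 :> nat by rewrite val_i0 val_i1.
  rewrite /std_pair /= mp (is_std_swap succ st res_eq).
  by apply: residues_tabl_swap; rewrite ?val_i0 ?val_i1.
- move=> [lam pos] /andP[/andP[_ /and4P[/injectiveP inj _ _ _]] _].
  apply/eqP => -[/ffunP/(_ i0)]; rewrite ffunE tpermL.
  by move=> /inj/(congr1 (@nat_of_ord _)); rewrite val_i0 val_i1; lia.
Qed.
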